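(* The category $\mathsf{SRng}$ of semirings is $S$-fibrewise algebraically cartesian closed, where $S$ is the class of Schreier split epimorphisms: for every split epimorphism $h\colon E\to B$ in $\mathsf{SRng}$, the change-of-base functor $h^*\colon SPt_B(\mathsf{SRng})\to SPt_E(\mathsf{SRng})$ has a right adjoint.
   Context: A semiring is a set with a commutative monoid structure $(+,0)$ and an associative (not necessarily unital) multiplication distributing over $+$ on both sides, with $0x=x0=0$. A point is a split epimorphism $f\colon A\to B$ with chosen section $s$; $Pt_B$ is the category of points over $B$; for $h\colon E\to B$, $h^*$ pulls points back along $h$. A split epimorphism $(A,B,f,s)$ of semirings is Schreier if each $a\in A$ can be written uniquely as $a=\alpha+sf(a)$ with $f(\alpha)=0$. $SPt_B(\mathsf{SRng})$ is the full subcategory of $Pt_B(\mathsf{SRng})$ of Schreier points. *)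

From Stdlib Require Import ProofIrrelevance.

Set Implicit Arguments.

Record semiring := Semiring {
  car :> Type;
  sadd : car -> car -> car;
  szero : car;
  smul : car -> car -> car;
  saddA : forall x y z, sadd x (sadd y z) = sadd (sadd x y) z;
  saddC : forall x y, sadd x y = sadd y x;
  sadd0 : forall x, sadd szero x = x;
  smulA : forall x y z, smul x (smul y z) = smul (smul x y) z;
  smulDl : forall x y z, smul (sadd x y) z = sadd (smul x z) (smul y z);
  smulDr : forall x y z, smul x (sadd y z) = sadd (smul x y) (smul x z);
  smul0l : forall x, smul szero x = szero;
  smul0r : forall x, smul x szero = szero
}.

Arguments sadd {s}. Arguments szero {s}. Arguments smul {s}.

Record hom (A B : semiring) := Hom {
  hfun :> A -> B;
  hadd : forall x y, hfun (sadd x y) = sadd (hfun x) (hfun y);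
  hzero : hfun szero = szero;
  hmul : forall x y, hfun (smul x y) = smul (hfun x) (hfun y)
}.

Record point (B : semiring) := Point {
  pA : semiring;
  pf : hom pA B;
  ps : hom B pA;
  psec : forall b, pf (ps b) = b
}.

Definition schreier (B : semiring) (P : point B) : Prop :=
  forall a : pA P, exists! alpha : pA P,
    pf P alpha = szero /\ a = sadd alpha (ps P (pf P a)).

Record ptmor (B : semiring) (P Q : point B) := PtMor {
  pm :> hom (pA P) (pA Q);
  pm_f : forall a, pf Q (pm a) = pf P a;
  pm_s : forall b, pm (ps P b) = ps Q b
}.

Section Pullback.
Variables (E B : semiring) (h : hom E B) (P : point B).

Definition pb_car : Type := { p : E * pA P | h (fst p) = pf P (snd p) }.

Lemma pb_sig_eq (x y : pb_car) : proj1_sig x = proj1_sig y -> x = y.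
Proof.
  destruct x as [x hx], y as [y hy]; simpl; intros ->.
  f_equal; apply proof_irrelevance.
Qed.

Definition pb_add (x y : pb_car) : pb_car.
Proof.
  refine (exist _ (sadd (fst (proj1_sig x)) (fst (proj1_sig y)),
                   sadd (snd (proj1_sig x)) (snd (proj1_sig y))) _).
  destruct x as [[e a] hx], y as [[e' a'] hy]; simpl in *.
  rewrite hadd, hadd, hx, hy; reflexivity.
Defined.

Definition pb_mul (x y : pb_car) : pb_car.
Proof.
  refine (exist _ (smul (fst (proj1_sig x)) (fst (proj1_sig y)),
                   smul (snd (proj1_sig x)) (snd (proj1_sig y))) _).
  destruct x as [[e a] hx], y as [[e' a'] hy]; simpl in *.
  rewrite hmul, hmul, hx, hy; reflexivity.
Defined.

Definition pb_zero : pb_car.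
Proof.
  refine (exist _ (szero, szero) _); simpl; rewrite hzero, hzero; reflexivity.
Defined.

Definition pb_semiring : semiring.
Proof.
  refine (@Semiring pb_car pb_add pb_zero pb_mul _ _ _ _ _ _ _ _);
  intros; apply pb_sig_eq; simpl;
  repeat match goal with x : pb_car |- _ => destruct x as [[? ?] ?] end; simpl;
  f_equal; auto using saddA, saddC, sadd0, smulA, smulDl, smulDr, smul0l, smul0r.
Defined.

Definition pb_proj : hom pb_semiring E.
Proof.
  refine (@Hom pb_semiring E (fun x => fst (proj1_sig x)) _ _ _); reflexivity.
Defined.

Definition pb_sec_fun (e : E) : pb_semiring.
Proof.
  refine (exist _ (e, ps P (h e)) _); simpl; rewrite psec; reflexivity.
Defined.

Definition pb_sec : hom E pb_semiring.
Proof.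
  refine (@Hom E pb_semiring pb_sec_fun _ _ _); intros; apply pb_sig_eq; simpl;
  rewrite ?hadd, ?hzero, ?hmul; reflexivity.
Defined.

Definition pullback : point E := @Point E pb_semiring pb_proj pb_sec (fun e => eq_refl).

End Pullback.

Section PullbackMor.
Variables (E B : semiring) (h : hom E B) (P Q : point B) (g : ptmor P Q).

Definition pbm_fun (x : pb_car h P) : pb_car h Q.
Proof.
  refine (exist _ (fst (proj1_sig x), g (snd (proj1_sig x))) _).
  destruct x as [[e a] hx]; simpl; rewrite pm_f; exact hx.
Defined.

Definition pbm_hom : hom (pA (pullback h P)) (pA (pullback h Q)).
Proof.
  refine (@Hom (pA (pullback h P)) (pA (pullback h Q)) pbm_fun _ _ _);
  intros; apply pb_sig_eq; simpl; rewrite ?hadd, ?hzero, ?hmul; reflexivity.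
Defined.

Definition pullback_mor : ptmor (pullback h P) (pullback h Q).
Proof.
  refine (@PtMor _ (pullback h P) (pullback h Q) pbm_hom _ _).
  - intros; reflexivity.
  - intros e; apply pb_sig_eq; simpl; rewrite pm_s; reflexivity.
Defined.

End PullbackMor.

(** h^* : SPt_B -> SPt_E has a right adjoint, stated via universal arrows
    (couniversal arrows from h^* to each object D of SPt_E): for each Schreier
    point D over E there is a Schreier point G over B and a counit
    eps : h^*(G) -> D such that every morphism f : h^*(C) -> D with C Schreier
    factors as eps o h^*(g) for a unique g : C -> G.  Morphisms are compared
    pointwise. *)
Definition has_right_adjoint_S (E B : semiring) (h : hom E B) : Prop :=
  forall D : point E, schreier D ->
  exists (G : point B) (HG : schreier G) (eps : ptmor (pullback h G) D),
    forall (C : point B), schreier C ->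
    forall f : ptmor (pullback h C) D,
      exists g : ptmor C G,
        (forall x, eps (pullback_mor h g x) = f x) /\
        (forall g' : ptmor C G,
           (forall x, eps (pullback_mor h g' x) = f x) ->
           forall a, g' a = g a).

(* For a Schreier point D = (A, f, s) over E, every a in A splits uniquely as
   a = kappa(a) + s f(a) with f kappa(a) = 0.  Choosing a section k of h, the
   right adjoint of h^* sends D to the subsemiring of A of those a with
   f a = k h f a whose kernel part is multiplied by s(e), on either side,
   in a way depending only on h(e); it is a Schreier point over B with
   projection h f and section s k.  The counit h^*G -> D is
   (e, a) |-> kappa(a) + s(e), which is multiplicative exactly because of
   that invariance, and a morphism F : h^*C -> D transposes to
   c |-> F(k f c, c). *)
From Stdlib Require Import ProofIrrelevance IndefiniteDescription.

Set Implicit Arguments.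

Lemma sig_eq (T : Type) (P : T -> Prop) (x y : {t | P t}) :
  proj1_sig x = proj1_sig y -> x = y.
Proof. destruct x, y; simpl; intros ->; f_equal; apply proof_irrelevance. Qed.

Lemma sadd0r {S : semiring} (x : S) : sadd x szero = x.
Proof. rewrite saddC; apply sadd0. Qed.

Lemma saddACA {S : semiring} (a b c d : S) :
  sadd (sadd a b) (sadd c d) = sadd (sadd a c) (sadd b d).
Proof. rewrite <- !saddA; f_equal; rewrite !saddA; f_equal; apply saddC. Qed.

Definition hcomp (R S T : semiring) (g : hom S T) (f : hom R S) : hom R T.
Proof.
  refine (@Hom R T (fun x => g (f x)) _ _ _); intros;
  rewrite ?hadd, ?hzero, ?hmul; reflexivity.
Defined.

Section SubSemiring.
Variables (S : semiring) (P : S -> Prop).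
Hypotheses (P0 : P szero)
  (PD : forall x y, P x -> P y -> P (sadd x y))
  (PM : forall x y, P x -> P y -> P (smul x y)).

Definition sub_semiring : semiring.
Proof.
  refine (@Semiring {x | P x}
    (fun x y => exist _ (sadd (proj1_sig x) (proj1_sig y)) (PD (proj2_sig x) (proj2_sig y)))
    (exist _ szero P0)
    (fun x y => exist _ (smul (proj1_sig x) (proj1_sig y)) (PM (proj2_sig x) (proj2_sig y)))
    _ _ _ _ _ _ _ _);
  intros; apply sig_eq; simpl;
  auto using saddA, saddC, sadd0, smulA, smulDl, smulDr, smul0l, smul0r.
Defined.

Definition sub_val : hom sub_semiring S.
Proof. refine (@Hom sub_semiring S (@proj1_sig _ _) _ _ _); reflexivity. Defined.

Definition sub_corestr (R : semiring) (g : hom R S) (Pg : forall x, P (g x)) :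
  hom R sub_semiring.
Proof.
  refine (@Hom R sub_semiring (fun x => exist _ (g x) (Pg x)) _ _ _);
  intros; apply sig_eq; simpl; rewrite ?hadd, ?hzero, ?hmul; reflexivity.
Defined.

End SubSemiring.

Arguments sub_semiring {S P}.
Arguments sub_val {S P P0 PD PM}.
Arguments sub_corestr {S P P0 PD PM R}.

Section KernelPart.
Variables (E : semiring) (D : point E) (HD : schreier D).

Definition ker_part (d : pA D) : pA D :=
  proj1_sig (constructive_indefinite_description _ (HD d)).

Lemma ker_part_spec d :
  pf D (ker_part d) = szero /\ d = sadd (ker_part d) (ps D (pf D d)).
Proof. exact (proj1 (proj2_sig (constructive_indefinite_description _ (HD d)))). Qed.

Lemma ker_part_f d : pf D (ker_part d) = szero.
Proof. apply ker_part_spec. Qed.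

Lemma ker_part_decomp d : d = sadd (ker_part d) (ps D (pf D d)).
Proof. apply ker_part_spec. Qed.

Lemma ker_part_sum a e : pf D a = szero -> ker_part (sadd a (ps D e)) = a.
Proof.
  intros Ha.
  assert (Hf : pf D (sadd a (ps D e)) = e) by (rewrite hadd, Ha, psec; apply sadd0).
  destruct (HD (sadd a (ps D e))) as [x [_ Hx]].
  transitivity x; [symmetry; apply Hx, ker_part_spec |].
  apply Hx; rewrite Hf; auto.
Qed.

Lemma ker_part_s e : ker_part (ps D e) = szero.
Proof. rewrite <- (sadd0 _ (ps D e)); apply ker_part_sum, hzero. Qed.

Lemma ker_part0 : ker_part szero = szero.
Proof. pose proof (ker_part_s szero) as H; rewrite hzero in H; exact H. Qed.

Lemma ker_part_idem d : ker_part (ker_part d) = ker_part d.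
Proof.
  rewrite <- (sadd0r (ker_part d)) at 1; rewrite <- (hzero (ps D)).
  apply ker_part_sum, ker_part_f.
Qed.

Lemma ker_partD d d' : ker_part (sadd d d') = sadd (ker_part d) (ker_part d').
Proof.
  rewrite (ker_part_decomp d) at 1; rewrite (ker_part_decomp d') at 1.
  rewrite saddACA, <- hadd; apply ker_part_sum.
  rewrite hadd, !ker_part_f; apply sadd0.
Qed.

Lemma ker_partM d d' : ker_part (smul d d') =
  sadd (sadd (smul (ker_part d) (ker_part d')) (smul (ker_part d) (ps D (pf D d'))))
       (smul (ps D (pf D d)) (ker_part d')).
Proof.
  rewrite (ker_part_decomp d) at 1; rewrite (ker_part_decomp d') at 1.
  rewrite smulDl, !smulDr, <- (hmul (ps D)), saddA; apply ker_part_sum.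
  rewrite !hadd, !hmul, !ker_part_f, !psec, !smul0l, !smul0r, !sadd0; reflexivity.
Qed.

End KernelPart.

Section FibreInvariant.
Variables (E B A : semiring) (h : hom E B) (s : hom E A).

Definition fibre_invariant (a : A) : Prop :=
  forall e e', h e = h e' ->
    smul (s e) a = smul (s e') a /\ smul a (s e) = smul a (s e').

Lemma fibre_invariant0 : fibre_invariant szero.
Proof. intros e e' _; rewrite !smul0r, !smul0l; auto. Qed.

Lemma fibre_invariantD a b :
  fibre_invariant a -> fibre_invariant b -> fibre_invariant (sadd a b).
Proof.
  intros Ha Hb e e' He; destruct (Ha e e' He), (Hb e e' He).
  rewrite !smulDr, !smulDl; split; congruence.
Qed.

Lemma fibre_invariantM a b :
  fibre_invariant a -> fibre_invariant b -> fibre_invariant (smul a b).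
Proof.
  intros Ha Hb e e' He; destruct (Ha e e' He), (Hb e e' He).
  rewrite !smulA; split; [congruence|]; rewrite <- !smulA; congruence.
Qed.

(* [a * s x * s e = a * s (x e)], and [h (x e)] depends only on [h e]. *)
Lemma fibre_invariantMs a x : fibre_invariant a -> fibre_invariant (smul a (s x)).
Proof.
  intros Ha e e' He; split.
  - rewrite !smulA; f_equal; apply (Ha e e' He).
  - rewrite <- !smulA, <- !hmul; apply (Ha (smul x e) (smul x e')).
    rewrite !hmul, He; reflexivity.
Qed.

Lemma fibre_invariantsM a x : fibre_invariant a -> fibre_invariant (smul (s x) a).
Proof.
  intros Ha e e' He; split.
  - rewrite !smulA, <- !hmul; apply (Ha (smul e x) (smul e' x)).
    rewrite !hmul, He; reflexivity.
  - rewrite <- !smulA; f_equal; apply (Ha e e' He).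
Qed.

End FibreInvariant.

Section RightAdjoint.
Variables (E B : semiring) (h : hom E B) (k : hom B E).
Hypothesis hk : forall b, h (k b) = b.
Variables (D : point E) (HD : schreier D).

Local Notation kappa := (ker_part HD).

Definition radj_mem (d : pA D) : Prop :=
  pf D d = k (h (pf D d)) /\ fibre_invariant h (ps D) (kappa d).

Lemma radj_mem0 : radj_mem szero.
Proof.
  split; [rewrite !hzero; reflexivity | rewrite ker_part0; apply fibre_invariant0].
Qed.

Lemma radj_memD a b : radj_mem a -> radj_mem b -> radj_mem (sadd a b).
Proof.
  intros [Ha Ia] [Hb Ib]; split.
  - rewrite !hadd, <- Ha, <- Hb; reflexivity.
  - rewrite ker_partD; apply fibre_invariantD; assumption.
Qed.

Lemma radj_memM a b : radj_mem a -> radj_mem b -> radj_mem (smul a b).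
Proof.
  intros [Ha Ia] [Hb Ib]; split.
  - rewrite !hmul, <- Ha, <- Hb; reflexivity.
  - rewrite ker_partM; repeat apply fibre_invariantD;
    auto using fibre_invariantM, fibre_invariantMs, fibre_invariantsM.
Qed.

Lemma radj_mem_sec b : radj_mem (ps D (k b)).
Proof.
  split; [rewrite !psec, hk; reflexivity | rewrite ker_part_s; apply fibre_invariant0].
Qed.

Lemma radj_mem_ker d : radj_mem d -> radj_mem (kappa d).
Proof.
  intros [_ I]; split; [rewrite ker_part_f, !hzero; reflexivity |].
  rewrite ker_part_idem; exact I.
Qed.

Definition radj_car : semiring := sub_semiring radj_mem0 radj_memD radj_memM.

Definition radj : point B.
Proof.
  refine (@Point B radj_car (hcomp h (hcomp (pf D) sub_val))
            (sub_corestr (hcomp (ps D) k) radj_mem_sec) _).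
  intros b; simpl; rewrite psec; apply hk.
Defined.

Lemma radj_schreier : schreier radj.
Proof.
  intros [d Hd].
  exists (exist _ (kappa d) (radj_mem_ker Hd)); split.
  - split; [simpl; rewrite ker_part_f, hzero; reflexivity |].
    apply sig_eq; simpl; rewrite <- (proj1 Hd); apply ker_part_decomp.
  - intros [a Ha] [H1 H2]; apply sig_eq; simpl in *.
    apply (f_equal (@proj1_sig _ _)) in H2; simpl in H2.
    rewrite <- (proj1 Hd) in H2; rewrite H2.
    apply ker_part_sum.
    rewrite (proj1 Ha), H1, hzero; reflexivity.
Qed.

Definition counit_fun (x : pA (pullback h radj)) : pA D :=
  sadd (kappa (proj1_sig (snd (proj1_sig x)))) (ps D (fst (proj1_sig x))).

Lemma counit_funM {g g' : pA D} {e e' : E} :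
  radj_mem g -> radj_mem g' -> h e = h (pf D g) -> h e' = h (pf D g') ->
  sadd (kappa (smul g g')) (ps D (smul e e')) =
  smul (sadd (kappa g) (ps D e)) (sadd (kappa g') (ps D e')).
Proof.
  intros [_ Ig] [_ Ig'] He He'.
  rewrite ker_partM, hmul, smulDl, !smulDr.
  rewrite (proj2 (Ig _ _ (eq_sym He'))), (proj1 (Ig' _ _ (eq_sym He))), saddA.
  reflexivity.
Qed.

Definition counit_hom : hom (pA (pullback h radj)) (pA D).
Proof.
  refine (@Hom _ _ counit_fun _ _ _).
  - intros [[e [g Hg]] He] [[e' [g' Hg']] He']; unfold counit_fun; simpl.
    rewrite ker_partD, hadd; apply saddACA.
  - unfold counit_fun; simpl; rewrite ker_part0, hzero; apply sadd0.
  - intros [[e [g Hg]] He] [[e' [g' Hg']] He']; exact (counit_funM Hg Hg' He He').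
Defined.

Definition counit : ptmor (pullback h radj) D.
Proof.
  refine (@PtMor _ (pullback h radj) D counit_hom _ _).
  - intros [[e [g Hg]] He]; unfold counit_hom, counit_fun; simpl.
    rewrite hadd, ker_part_f, psec; apply sadd0.
  - intros e; unfold counit_hom, counit_fun; simpl; rewrite ker_part_s; apply sadd0.
Defined.

Section Transpose.
Variables (C : point B) (HC : schreier C) (F : ptmor (pullback h C) D).

Definition pb_ker (c : pA C) : pA (pullback h C).
Proof.
  refine (exist _ (szero, ker_part HC c) _); simpl.
  rewrite hzero, ker_part_f; reflexivity.
Defined.

Lemma ptmor_pb_split x :
  F x = sadd (F (pb_ker (snd (proj1_sig x)))) (ps D (fst (proj1_sig x))).
Proof.
  rewrite <- (pm_s F), <- (hadd F); f_equal; apply pb_sig_eq.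
  destruct x as [[e c] hx]; simpl in *; f_equal.
  - symmetry; apply sadd0.
  - rewrite hx; apply ker_part_decomp.
Qed.

Lemma ker_part_ptmor x : kappa (F x) = F (pb_ker (snd (proj1_sig x))).
Proof. rewrite (ptmor_pb_split x); apply ker_part_sum; rewrite (pm_f F); reflexivity. Qed.

Lemma pb_ker_invariant c : fibre_invariant h (ps D) (F (pb_ker c)).
Proof.
  intros e e' He; rewrite <- !(pm_s F), <- !(hmul F).
  split; f_equal; apply pb_sig_eq; simpl; rewrite He, ?smul0r, ?smul0l; reflexivity.
Qed.

Definition pb_graph : hom (pA C) (pA (pullback h C)).
Proof.
  refine (@Hom (pA C) (pA (pullback h C))
            (fun c : pA C => exist _ (k (pf C c), c) (hk (pf C c))) _ _ _);
  intros; apply pb_sig_eq; simpl; rewrite ?hadd, ?hzero, ?hmul; reflexivity.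
Defined.

Lemma radj_mem_transpose c : radj_mem (F (pb_graph c)).
Proof.
  split.
  - rewrite (pm_f F); simpl; rewrite hk; reflexivity.
  - rewrite ker_part_ptmor; apply pb_ker_invariant.
Qed.

Definition transpose : ptmor C radj.
Proof.
  refine (@PtMor _ C radj (sub_corestr (hcomp F pb_graph) radj_mem_transpose) _ _).
  - intros c; simpl; rewrite (pm_f F); apply hk.
  - intros b; apply sig_eq; simpl; rewrite <- (pm_s F); f_equal.
    apply pb_sig_eq; simpl; rewrite psec, hk; reflexivity.
Defined.

Lemma transpose_counit x : counit (pullback_mor h transpose x) = F x.
Proof.
  destruct x as [[e c] hx]; unfold counit_fun; simpl.
  change (sadd (kappa (F (pb_graph c))) (ps D e) = F (exist _ (e, c) hx)).
  rewrite (ker_part_ptmor (pb_graph c)), (ptmor_pb_split (exist _ (e, c) hx)).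
  reflexivity.
Qed.

Lemma transpose_unique (g : ptmor C radj) :
  (forall x, counit (pullback_mor h g x) = F x) -> forall c, g c = transpose c.
Proof.
  intros Hg c; apply sig_eq.
  transitivity (counit (pullback_mor h g (pb_graph c))); [| apply Hg].
  change (proj1_sig (g c) = sadd (kappa (proj1_sig (g c))) (ps D (k (pf C c)))).
  replace (k (pf C c)) with (pf D (proj1_sig (g c))); [apply ker_part_decomp |].
  rewrite <- (pm_f g c); exact (proj1 (proj2_sig (g c))).
Qed.

End Transpose.
End RightAdjoint.

Theorem mainTheorem4 (E B : semiring) (h : hom E B)
  (hsplit : exists k : hom B E, forall b, h (k b) = b) :
  has_right_adjoint_S h.
Proof.
  destruct hsplit as [k hk]; intros D HD.
  exists (radj h k hk HD), (radj_schreier (hk := hk) (HD := HD)), (counit h k hk HD).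
  intros C HC F; exists (transpose k hk HD HC F); split.
  - apply transpose_counit.
  - apply transpose_unique.
Qed.
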